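(* Let $\epsilon>0$ and $p=e^{\epsilon}/(e^{\epsilon}+1)$. Let $n\ge1$ users $u_1,\dots,u_n$, where user $u_i$ holds a value $v_i\in[-1,1]$ and a privacy preference $\epsilon_u^i\in\mathbb{R}$. Each user independently sets $v_i'=v_i$ if $\epsilon\le\epsilon_u^i$ and $v_i'=\bot$ otherwise, samples $s_i\in\{0,1\}$ uniformly at random, and draws $b_i\in\{0,1\}$ with $$\Pr[b_i=1]=\begin{cases}\frac{1-e^{\epsilon}}{1+e^{\epsilon}}\cdot\frac{v_i'}{2}+\frac12 & \text{if } s_i=0,\ v_i'\in[-1,1],\\ \frac{e^{\epsilon}-1}{e^{\epsilon}+1}\cdot\frac{v_i'}{2}+\frac12 & \text{if } s_i=1,\ v_i'\in[-1,1],\\ \frac{1}{e^{\epsilon}+1} & \text{if } v_i'=\bot \ (\text{either } s_i),\end{cases}$$ and reports $\langle s_i,b_i\rangle$. Let $$f_{\mathrm{POS}}=\frac{\#\{i:\langle s_i,b_i\rangle=\langle1,1\rangle\}}{\#\{i:s_i=1\}},\qquad f_{\mathrm{NEG}}=\frac{\#\{i:\langle s_i,b_i\rangle=\langle0,1\rangle\}}{\#\{i:s_i=0\}},$$ let $s=\sum_{i:\,\epsilon_u^i\ge\epsilon} v_i$ be the sum of the truthfully provided values and $f_\bot=\#\{i:\epsilon_u^i<\epsilon\}/n$ the fraction of users providing a null value, and define $$s^*=\frac{n}{2p-1}\left(f_{\mathrm{POS}}-f_{\mathrm{NEG}}\right),\qquad f_\bot^*=\frac{1-f_{\mathrm{POS}}-f_{\mathrm{NEG}}}{2p-1}.$$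 Then, conditionally on the event that $\#\{i:s_i=1\}\ge1$ and $\#\{i:s_i=0\}\ge1$, $s^*$ and $f_\bot^*$ are unbiased estimators of $s$ and $f_\bot$ respectively, i.e. $\mathbb{E}[s^*]=s$ and $\mathbb{E}[f_\bot^*]=f_\bot$.
   Context: All randomness is over the users' independent coin flips; the values $v_i$ and preferences $\epsilon_u^i$ are fixed. *)

From HB Require Import structures.
From mathcomp Require Import all_boot all_order all_algebra.
From mathcomp Require Import all_classical all_reals all_analysis.
Set Implicit Arguments. Unset Strict Implicit. Unset Printing Implicit Defensive.
Import Order.TTheory GRing.Theory Num.Theory.
Local Open Scope ring_scope.

Section Defs.
Variable R : realType.

Definition pp (eps : R) : R := expR eps / (expR eps + 1).

(* user i is truthful (v_i' = v_i) iff eps <= eps_u^i, otherwise v_i' = bottom *)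
Definition prob_b1 (eps v eu : R) (s : bool) : R :=
  if eps <= eu then
    (if s then (expR eps - 1) / (expR eps + 1) * (v / 2) + 1 / 2
     else (1 - expR eps) / (1 + expR eps) * (v / 2) + 1 / 2)
  else 1 / (expR eps + 1).

(* An outcome of the whole protocol: for each user the report (s_i, b_i). *)
Definition outcome (n : nat) := {ffun 'I_n -> bool * bool}.

(* Probability of report (s,b) for one user: s uniform, then b by prob_b1. *)
Definition user_prob (eps v eu : R) (sb : bool * bool) : R :=
  (1 / 2) * (if sb.2 then prob_b1 eps v eu sb.1 else 1 - prob_b1 eps v eu sb.1).

(* Users are independent: product measure. *)
Definition Prob (n : nat) (eps : R) (v eu : 'I_n -> R) (w : outcome n) : R :=
  \prod_(i < n) user_prob eps (v i) (eu i) (w i).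

Definition n_s1 n (w : outcome n) : nat := #|[set i | (w i).1]|.
Definition n_s0 n (w : outcome n) : nat := #|[set i | ~~ (w i).1]|.
Definition n_11 n (w : outcome n) : nat := #|[set i | w i == (true, true)]|.
Definition n_01 n (w : outcome n) : nat := #|[set i | w i == (false, true)]|.

Definition f_POS n (w : outcome n) : R := (n_11 w)%:R / (n_s1 w)%:R.
Definition f_NEG n (w : outcome n) : R := (n_01 w)%:R / (n_s0 w)%:R.

Definition s_star n (eps : R) (w : outcome n) : R :=
  n%:R / (2 * pp eps - 1) * (f_POS w - f_NEG w).
Definition fbot_star n (eps : R) (w : outcome n) : R :=
  (1 - f_POS w - f_NEG w) / (2 * pp eps - 1).

Definition s_true n (eps : R) (v eu : 'I_n -> R) : R :=
  \sum_(i < n | eps <= eu i) v i.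
Definition fbot_true n (eps : R) (eu : 'I_n -> R) : R :=
  #|[set i : 'I_n | eu i < eps]|%:R / n%:R.

Definition cond_ev n (w : outcome n) : bool := (0 < n_s1 w)%N && (0 < n_s0 w)%N.

Definition Pr_cond n (eps : R) (v eu : 'I_n -> R) : R :=
  \sum_(w : outcome n | cond_ev w) Prob eps v eu w.

Definition condE n (eps : R) (v eu : 'I_n -> R) (X : outcome n -> R) : R :=
  (\sum_(w : outcome n | cond_ev w) Prob eps v eu w * X w) / Pr_cond eps v eu.

End Defs.

From HB Require Import structures.
From mathcomp Require Import all_boot all_order all_algebra.
From mathcomp Require Import all_classical all_reals all_analysis.
From mathcomp Require Import perm ring lra.
Set Implicit Arguments. Unset Strict Implicit. Unset Printing Implicit Defensive.
Import Order.TTheory GRing.Theory Num.Theory.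
Local Open Scope ring_scope.

(* Given the vector s of coin flips, the bits b_i are independent with Pr[b_i = 1] = q_i(s_i).
   Writing f_c = #{i | s_i = c, b_i = 1} / #{i | s_i = c} (so f_POS = f_1 and f_NEG = f_0), this
   gives E[f_c; balanced] = sum_i q_i(c) E[[s_i = c] / #{j | s_j = c}; balanced], where balanced
   is the conditioning event.  As s is uniform, hence exchangeable, the last expectation does not
   depend on i, and its sum over i is Pr[balanced]; so E[f_c | balanced] = (1/n) sum_i q_i(c).
   Both estimators are affine in (f_POS, f_NEG), and the per-user identities
   q_i(1) - q_i(0) = (2p - 1) v_i' and q_i(1) + q_i(0) = 1 - (2p - 1) [v_i' = bot] conclude. *)

Lemma sumr_indicator (R : pzSemiRingType) (I : finType) (P : pred I) :
  \sum_i (P i)%:R = #|[set i | P i]|%:R :> R.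
Proof.
rewrite -natr_sum -sum1_card [in RHS]big_mkcond /=.
by congr _%:R; apply: eq_bigr => i _; rewrite inE; case: (P i).
Qed.

Section Exchangeability.
Variables (I T : finType).

Definition nvals (c : T) (s : {ffun I -> T}) : nat := #|[set k | s k == c]|.

Lemma nvals_perm (σ : {perm I}) c (s : {ffun I -> T}) :
  nvals c [ffun k => s (σ k)] = nvals c s.
Proof.
rewrite /nvals -[in RHS](card_preimset _ (@perm_inj _ σ)).
by apply: eq_card => k; rewrite !inE ffunE.
Qed.

Lemma sum_ffun_exchangeable (R : nmodType) (G : T -> {ffun I -> T} -> R) (i j : I) :
    (forall (σ : {perm I}) x (s : {ffun I -> T}), G x [ffun k => s (σ k)] = G x s) ->
  \sum_(s : {ffun I -> T}) G (s i) s = \sum_(s : {ffun I -> T}) G (s j) s.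
Proof.
move=> G_perm.
pose swap (s : {ffun I -> T}) : {ffun I -> T} := [ffun k => s (tperm i j k)].
have swap_inj : injective swap.
  move=> s t eq_st; apply/ffunP => k.
  by have := congr1 (fun f : {ffun I -> T} => f (tperm i j k)) eq_st; rewrite !ffunE tpermK.
by rewrite (reindex_inj swap_inj); apply: eq_bigr => s _; rewrite G_perm ffunE tpermL.
Qed.

End Exchangeability.

Section UserReport.
Variables (R : realType) (eps v eu : R).

Let expR_add1_neq0 : expR eps + 1 != 0.
Proof. by rewrite lt0r_neq0 // addr_gt0 ?expR_gt0. Qed.

Lemma pp_gap : 2 * pp eps - 1 = (expR eps - 1) / (expR eps + 1).
Proof. by rewrite /pp; field. Qed.

Lemma pp_gap_neq0 : 0 < eps -> 2 * pp eps - 1 != 0.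
Proof.
move=> /pexpR_gt1 expR_gt1.
by rewrite pp_gap mulf_neq0 ?invr_eq0 // lt0r_neq0 //; lra.
Qed.

Lemma prob_b1_sub :
  prob_b1 eps v eu true - prob_b1 eps v eu false =
  (2 * pp eps - 1) * (if eps <= eu then v else 0).
Proof.
rewrite pp_gap /prob_b1; case: ifP => _; last by rewrite subrr mulr0.
by rewrite [1 + _]addrC; field.
Qed.

Lemma prob_b1_add :
  prob_b1 eps v eu true + prob_b1 eps v eu false =
  1 - (2 * pp eps - 1) * (eu < eps)%R%:R.
Proof.
rewrite pp_gap /prob_b1 ltNge; case: ifP => _ /=; rewrite ?mulr0 ?mulr1 ?subr0.
  by rewrite [1 + _]addrC; field.
by field.
Qed.

Lemma sum_user_prob_report c (h : bool -> R) :
  \sum_(x | x.1 == c) user_prob eps v eu x * h x.2 =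
  1 / 2 * (prob_b1 eps v eu c * h true + (1 - prob_b1 eps v eu c) * h false).
Proof.
rewrite (bigD1 (c, true)) ?eqxx // (bigD1 (c, false)) /=; last first.
  by rewrite xpair_eqE eqxx.
rewrite big1 ?addr0; first by rewrite /user_prob /=; ring.
by case=> a [] /=; rewrite xpair_eqE; case: eqP => // ->; rewrite eqxx.
Qed.

End UserReport.

Section Protocol.
Variables (R : realType) (eps : R) (n : nat) (v eu : 'I_n -> R).

Local Notation q i := (prob_b1 eps (v i) (eu i)).

Definition pattern (w : outcome n) : {ffun 'I_n -> bool} := [ffun i => (w i).1].

Definition balanced (s : {ffun 'I_n -> bool}) : bool :=
  (0 < nvals true s)%N && (0 < nvals false s)%N.

Lemma n_s1_pattern (w : outcome n) : n_s1 w = nvals true (pattern w).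
Proof. by apply: eq_card => i; rewrite !inE ffunE eqb_id. Qed.

Lemma n_s0_pattern (w : outcome n) : n_s0 w = nvals false (pattern w).
Proof. by apply: eq_card => i; rewrite !inE ffunE eqbF_neg. Qed.

Lemma cond_ev_pattern (w : outcome n) : cond_ev w = balanced (pattern w).
Proof. by rewrite /cond_ev n_s1_pattern n_s0_pattern. Qed.

Lemma sum_Prob_pattern_prod s (h : 'I_n -> bool -> R) :
  \sum_(w | pattern w == s) Prob eps v eu w * \prod_j h j (w j).2 =
  \prod_j (1 / 2 * (q j (s j) * h j true + (1 - q j (s j)) * h j false)).
Proof.
transitivity (\sum_(w | pattern w == s)
                \prod_j (user_prob eps (v j) (eu j) (w j) * h j (w j).2)).
  by apply: eq_bigr => w _; rewrite big_split.
rewrite (eq_bigl (fun w => w \in family (fun j => [pred x | x.1 == s j]))).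
  rewrite -(bigA_distr_big_dep _ (fun j x => user_prob eps (v j) (eu j) x * h j x.2)).
  by apply: eq_bigr => j _; apply: sum_user_prob_report.
move=> w; apply/eqP/familyP => [<- j|eq_ws]; first by rewrite inE ffunE.
by apply/ffunP => j; rewrite ffunE; apply/eqP/eq_ws.
Qed.

Lemma sum_Prob_pattern s : \sum_(w | pattern w == s) Prob eps v eu w = (1 / 2) ^+ n.
Proof.
transitivity (\prod_(j < n) (1 / 2 * (q j (s j) * 1 + (1 - q j (s j)) * 1))).
  rewrite -(sum_Prob_pattern_prod s (fun _ _ => 1)).
  by apply: eq_bigr => w _; rewrite big1_eq mulr1.
rewrite (eq_bigr (fun=> 1 / 2)) ?prodr_const ?card_ord // => j _.
by ring.
Qed.

Lemma sum_Prob_pattern_report s i (h : bool -> R) :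
  \sum_(w | pattern w == s) Prob eps v eu w * h (w i).2 =
  (1 / 2) ^+ n * (q i (s i) * h true + (1 - q i (s i)) * h false).
Proof.
pose h' j := if j == i then h else fun=> 1.
transitivity (\sum_(w | pattern w == s) Prob eps v eu w * \prod_j h' j (w j).2).
  apply: eq_bigr => w _; rewrite (bigD1 i) //= big1 ?mulr1 => [|j /negbTE ji].
    by rewrite /h' eqxx.
  by rewrite /h' ji.
rewrite sum_Prob_pattern_prod big_split prodr_const card_ord /= (bigD1 i) //=.
rewrite big1 ?mulr1 => [|j /negbTE ji]; rewrite /h' ?eqxx ?ji //.
by ring.
Qed.

Lemma sum_Prob_pattern_fun (K : {ffun 'I_n -> bool} -> R) :
  \sum_w Prob eps v eu w * K (pattern w) = (1 / 2) ^+ n * \sum_s K s.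
Proof.
rewrite (partition_big pattern xpredT) //= mulr_sumr; apply: eq_bigr => s _.
by rewrite -(sum_Prob_pattern s) mulr_suml; apply: eq_bigr => w /eqP ->.
Qed.

Lemma sum_Prob_report i (G : {ffun 'I_n -> bool} -> bool -> R) :
  \sum_w Prob eps v eu w * G (pattern w) (w i).2 =
  (1 / 2) ^+ n *
  \sum_(s : {ffun 'I_n -> bool}) (q i (s i) * G s true + (1 - q i (s i)) * G s false).
Proof.
rewrite (partition_big pattern xpredT) //= mulr_sumr; apply: eq_bigr => s _.
by rewrite -(sum_Prob_pattern_report s i (G s)); apply: eq_bigr => w /eqP ->.
Qed.

Lemma Pr_cond_balanced :
  Pr_cond eps v eu = (1 / 2) ^+ n * \sum_s (balanced s)%:R.
Proof.
rewrite /Pr_cond big_mkcond -sum_Prob_pattern_fun; apply: eq_bigr => w _.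
by rewrite cond_ev_pattern; case: balanced; rewrite ?mulr1 ?mulr0.
Qed.

Definition frac_reports c (w : outcome n) : R :=
  #|[set i | w i == (c, true)]|%:R / (nvals c (pattern w))%:R.

Lemma f_POS_frac_reports w : f_POS R w = frac_reports true w.
Proof. by rewrite /f_POS n_s1_pattern. Qed.

Lemma f_NEG_frac_reports w : f_NEG R w = frac_reports false w.
Proof. by rewrite /f_NEG n_s0_pattern. Qed.

Lemma frac_reports_sum c w :
  frac_reports c w =
  \sum_i (pattern w i == c)%:R / (nvals c (pattern w))%:R * (w i).2%:R.
Proof.
rewrite /frac_reports -sumr_indicator mulr_suml; apply: eq_bigr => i _.
rewrite ffunE; case: (w i) => a b /=; rewrite xpair_eqE.
by case: (a == c); case: b; rewrite /= ?mulr1 ?mulr0 ?mul0r.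
Qed.

Definition balanced_share c i : R :=
  \sum_(s : {ffun 'I_n -> bool}) (balanced s && (s i == c))%:R / (nvals c s)%:R.

Lemma sum_cond_frac_reports c :
  \sum_(w | cond_ev w) Prob eps v eu w * frac_reports c w =
  (1 / 2) ^+ n * \sum_i q i c * balanced_share c i.
Proof.
pose G i s (b : bool) : R := (balanced s && (s i == c))%:R / (nvals c s)%:R * b%:R.
transitivity (\sum_i \sum_w Prob eps v eu w * G i (pattern w) (w i).2).
  rewrite exchange_big big_mkcond; apply: eq_bigr => w _.
  rewrite cond_ev_pattern frac_reports_sum mulr_sumr /G.
  by case: balanced => //=; rewrite big1 // => i _; rewrite !mul0r mulr0.
rewrite mulr_sumr; apply: eq_bigr => i _; rewrite sum_Prob_report.
congr (_ * _); rewrite mulr_sumr; apply: eq_bigr => s _; rewrite /G.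
by case: (s i =P c) => [->|_]; rewrite ?andbT ?andbF /= ?mul0r ?mulr1 ?mulr0 ?addr0.
Qed.

Lemma balanced_share_exchangeable c i j : balanced_share c i = balanced_share c j.
Proof.
apply: (@sum_ffun_exchangeable _ _ R (fun (x : bool) (s : {ffun 'I_n -> bool}) =>
  (balanced s && (x == c))%:R / (nvals c s)%:R : R)).
by move=> σ x s; rewrite /balanced !nvals_perm.
Qed.

Lemma sum_balanced_share c :
  \sum_i balanced_share c i = \sum_(s : {ffun 'I_n -> bool}) (balanced s)%:R.
Proof.
rewrite exchange_big; apply: eq_bigr => s _.
case s_bal: (balanced s) => /=; last by rewrite big1 // => j _; rewrite mul0r.
rewrite -mulr_suml sumr_indicator mulfV // pnatr_eq0 -lt0n.
by case/andP: s_bal; case: c.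
Qed.

Lemma balanced_shareE c i :
  balanced_share c i = (\sum_(s : {ffun 'I_n -> bool}) (balanced s)%:R) / n%:R.
Proof.
have n_neq0 : n%:R != 0 :> R by rewrite pnatr_eq0 -lt0n; apply: leq_ltn_trans (ltn_ord i).
rewrite -(sum_balanced_share c) (eq_bigr (fun=> balanced_share c i)) => [|j _].
  by rewrite sumr_const card_ord -[balanced_share c i *+ n]mulr_natr mulfK.
exact: balanced_share_exchangeable.
Qed.

Section Estimators.
Hypotheses (n_gt0 : (0 < n)%N) (Pr_cond_neq0 : Pr_cond eps v eu != 0).
Hypothesis gap_neq0 : 2 * pp eps - 1 != 0.

Let natn_neq0 : n%:R != 0 :> R.
Proof. by rewrite pnatr_eq0 -lt0n. Qed.

Lemma condE_affine a b c (X Y : outcome n -> R) :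
  condE eps v eu (fun w => a + b * X w + c * Y w) =
  a + b * condE eps v eu X + c * condE eps v eu Y.
Proof.
rewrite /condE.
under eq_bigr do rewrite !mulrDr mulrCA [Prob eps v eu _ * (c * _)]mulrCA.
rewrite !big_split /= -mulr_suml -!mulr_sumr -/(Pr_cond eps v eu).
by field.
Qed.

Lemma condE_frac_reports c :
  condE eps v eu (frac_reports c) = (\sum_i q i c) / n%:R.
Proof.
move: Pr_cond_neq0; rewrite /condE sum_cond_frac_reports Pr_cond_balanced.
rewrite mulf_eq0 negb_or => /andP[pow_neq0 balanced_neq0].
under eq_bigr do rewrite balanced_shareE.
by rewrite -mulr_suml; field; rewrite natn_neq0 balanced_neq0 pow_neq0.
Qed.

Lemma condE_s_star : condE eps v eu (s_star eps) = s_true eps v eu.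
Proof.
set k := 2 * pp eps - 1.
rewrite (_ : s_star eps = fun w => 0 + n%:R / k * frac_reports true w +
                                    (- (n%:R / k)) * frac_reports false w); last first.
  by apply/funext => w; rewrite /s_star f_POS_frac_reports f_NEG_frac_reports; ring.
rewrite condE_affine !condE_frac_reports /s_true [RHS]big_mkcond /=.
have -> : \sum_i (if eps <= eu i then v i else 0) = \sum_i (q i true - q i false) / k.
  by apply: eq_bigr => i _; rewrite prob_b1_sub -/k mulrC mulKf.
by rewrite -mulr_suml sumrB; field; rewrite gap_neq0 natn_neq0.
Qed.

Lemma condE_fbot_star : condE eps v eu (fbot_star eps) = fbot_true eps eu.
Proof.
set k := 2 * pp eps - 1.
rewrite (_ : fbot_star eps = fun w => 1 / k + (- 1 / k) * frac_reports true w +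
                                       (- 1 / k) * frac_reports false w); last first.
  by apply/funext => w; rewrite /fbot_star f_POS_frac_reports f_NEG_frac_reports -/k; field.
rewrite condE_affine !condE_frac_reports /fbot_true.
have -> : \sum_i q i true = \sum_i (1 - k * (eu i < eps)%R%:R - q i false).
  by apply: eq_bigr => i _; rewrite /k -(prob_b1_add eps (v i) (eu i)); ring.
rewrite !sumrB -mulr_sumr sumr_indicator sumr_const card_ord.
by field; rewrite gap_neq0 natn_neq0.
Qed.

End Estimators.

End Protocol.

Theorem theorem5 (R : realType) (eps : R) (n : nat) (v eu : 'I_n -> R)
  (heps : 0 < eps) (hn : (1 <= n)%N)
  (hv : forall i, -1 <= v i <= 1)
  (hcond : 0 < Pr_cond eps v eu) :
  condE eps v eu (s_star eps) = s_true eps v eu /\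
  condE eps v eu (fbot_star eps) = fbot_true eps eu.
Proof.
have Pr_cond_neq0 : Pr_cond eps v eu != 0 by rewrite lt0r_neq0.
have gap_neq0 := pp_gap_neq0 heps.
by split; [apply: condE_s_star | apply: condE_fbot_star].
Qed.
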